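(* Let $G$ be a finite non-abelian group satisfying condition (Con). Then the algebraic connectivity of $\mathcal C_G$ (the second smallest eigenvalue, counted with multiplicity, of its Laplacian matrix) equals $|Z(G)|$.
   Context: For a finite group $G$, the commuting graph $\mathcal C_G$ is the simple undirected graph with vertex set $G$ in which distinct $u,v\in G$ are adjacent iff $uv=vu$. The Laplacian matrix of a simple graph is $L=D-A$ ($A$ adjacency matrix, $D$ diagonal degree matrix). $Z(G)$ is the center of $G$ and $C(v)=\{w\in G: wv=vw\}$ the centralizer of $v$. Condition (Con): for all $u,v\in G\setminus Z(G)$, either $C(u)=C(v)$ or $C(u)\cap C(v)=Z(G)$. *)

From mathcomp Require Import all_boot all_order all_algebra all_fingroup all_solvable all_field.
Set Implicit Arguments. Unset Strict Implicit. Unset Printing Implicit Defensive.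
Import Order.TTheory GRing.Theory Num.Theory.
Local Open Scope ring_scope.

Definition cg_adj (gT : finGroupType) (u v : gT) : bool :=
  (u != v) && (u * v == v * u)%g.

Definition cg_deg (gT : finGroupType) (G : {set gT}) (v : gT) : nat :=
  #|[set w in G | cg_adj v w]|.

(* Laplacian L = D - A of the commuting graph of G, vertices of G indexed
   by 'I_#|G| via enum_val; entries in algC (they are integers). *)
Definition cg_laplacian (gT : finGroupType) (G : {set gT}) : 'M[algC]_#|G| :=
  \matrix_(i, j) ((cg_deg G (enum_val i))%:R *+ (i == j)
                  - (cg_adj (enum_val i) (enum_val j))%:R).

Definition eigenvalues_mult n (A : 'M[algC]_n) : seq algC :=
  sval (closed_field_poly_normal (char_poly A)).

(* Second smallest eigenvalue (counted with multiplicity).  Meaningful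
   when all eigenvalues are real (e.g. for a real symmetric matrix). *)
Definition algebraic_connectivity n (A : 'M[algC]_n) : algC :=
  nth 0 (sort <=%R (eigenvalues_mult A)) 1.

Definition Con (gT : finGroupType) (G : {set gT}) : Prop :=
  (forall u v, u \in G :\: 'Z(G) -> v \in G :\: 'Z(G) ->
    'C_G[u] = 'C_G[v] \/ 'C_G[u] :&: 'C_G[v] = 'Z(G))%g.
Arguments Con [gT] G%_g.

From mathcomp Require Import all_boot all_order all_algebra all_fingroup all_solvable all_field.
From mathcomp Require Import ring.
Set Implicit Arguments. Unset Strict Implicit. Unset Printing Implicit Defensive.
Import Order.TTheory GRing.Theory Num.Theory.
Local Open Scope ring_scope.

(* Identify vectors indexed by 'I_#|G| with functions f on G.  Since every
   vertex is adjacent to the rest of its centralizer, the Laplacian L acts by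
   (f L)(u) = sum_(w in C_G[u]) (f u - f w), so f is a lam-eigenvector iff
   (|C_G[u]| - lam) f u = sum_(w in C_G[u]) f w for all u in G.  Under (Con)
   the sets C_G[u] \ Z(G) (u non-central) are blocks on which centralizers are
   constant; solving the equations shows that an eigenvalue is either 0,
   |Z(G)|, the order of a centralizer (which is >= |Z(G)|), or else its
   eigenvector vanishes.  0 is an eigenvalue (constant vector), and so is
   |Z(G)| when G is non-abelian (a difference of two block indicators).
   Finally 0 is a simple root of char_poly L: with E the matrix whose first
   column is all ones, L E = 0 gives char_poly L * char_poly E =
   X^n * char_poly (L + E), and L + E is invertible under (Con).  Sorting the
   roots then makes |Z(G)| the second smallest eigenvalue. *)

Lemma mem_cent1 (gT : finGroupType) (G : {set gT}) (u w : gT) :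
  (w \in 'C_G[u])%g = (w \in G) && (w * u == u * w)%g.
Proof. by rewrite inE cent1E. Qed.

Lemma cg_adjC (gT : finGroupType) : symmetric (@cg_adj gT).
Proof. by move=> u w; rewrite /cg_adj eq_sym [(w * u == _)%g]eq_sym. Qed.

Section LaplacianAction.
Variables (gT : finGroupType) (G : {group gT}).
Local Notation L := (cg_laplacian G).

Definition vecG (f : gT -> algC) : 'rV[algC]_#|G| := \row_i f (enum_val i).

Definition funG (v : 'rV[algC]_#|G|) (g : gT) : algC :=
  v 0 (enum_rank_in (group1 G) g).

Lemma funGK v : vecG (funG v) = v.
Proof. by apply/rowP => i; rewrite mxE /funG enum_valK_in. Qed.

Lemma vecG_eq0 f : vecG f = 0 <-> {in G, forall u, f u = 0}.
Proof.
split=> [/rowP f0 u uG | f0]; last by apply/rowP => i; rewrite !mxE f0 ?enum_valP.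
by have := f0 (enum_rank_in (group1 G) u); rewrite !mxE enum_rankK_in.
Qed.

(* Summing over the neighbours of u and u itself is summing over 'C_G[u];
   the term at u is required to vanish. *)
Lemma sum_adj_cent1 (u : gT) (F : gT -> algC) : F u = 0 ->
  \sum_(w in G) F w *+ cg_adj u w = \sum_(w in 'C_G[u]%g) F w.
Proof.
move=> Fu0; rewrite [RHS](eq_bigl (fun w => (w \in G) && (w * u == u * w)%g));
  last by move=> w; rewrite mem_cent1.
rewrite big_mkcondr /=; apply: eq_bigr => w _; rewrite /cg_adj eq_sym.
have [->|_] := eqVneq w u; first by rewrite Fu0 mul0rn; case: ifP.
by rewrite /= [(w * u == _)%g]eq_sym; case: ifP.
Qed.

Lemma cg_deg_sum u : (cg_deg G u)%:R = \sum_(w in G) (cg_adj u w)%:R :> algC.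
Proof.
rewrite /cg_deg -sum1_card (eq_bigl (fun w => (w \in G) && cg_adj u w)) => [|w];
  last by rewrite inE.
by rewrite big_mkcondr natr_sum; apply: eq_bigr => w _; case: (cg_adj u w).
Qed.

Lemma laplacian_row f j :
  (vecG f *m L) 0 j = \sum_(w in 'C_G[enum_val j]%g) (f (enum_val j) - f w).
Proof.
set u := enum_val j; rewrite -sum_adj_cent1 ?subrr //.
under eq_bigr => w _ do rewrite mulrnBl -(mulr_natr (f u)) -(mulr_natr (f w)).
rewrite sumrB -mulr_sumr -cg_deg_sum mxE /vecG /cg_laplacian.
under [LHS]eq_bigr => i _ do rewrite !mxE mulrBr.
rewrite sumrB (bigD1 j) //= eqxx mulr1n big1 ?addr0 => [|i /negbTE ->]; last first.
  by rewrite mulr0n mulr0.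
congr (_ - _); rewrite (big_enum_val (fun w => f w * (cg_adj u w)%:R)).
by apply: eq_bigr => i _; rewrite cg_adjC.
Qed.

Lemma laplacian_eigenP f lam :
  vecG f *m L = lam *: vecG f <->
  {in G, forall u, \sum_(w in 'C_G[u]%g) (f u - f w) = lam * f u}.
Proof.
split=> [/rowP eqf u uG | eqf]; last first.
  by apply/rowP => j; rewrite laplacian_row !mxE eqf ?enum_valP.
have := eqf (enum_rank_in (group1 G) u).
by rewrite laplacian_row !mxE enum_rankK_in.
Qed.

Lemma laplacian_sym : L^T = L.
Proof.
apply/matrixP => i j; rewrite !mxE (cg_adjC (enum_val j)) eq_sym.
by have [->|] := eqVneq j i.
Qed.

Lemma laplacian_rowsum i : \sum_j L i j = 0.
Proof.
have row1 := laplacian_row (fun=> 1) i.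
rewrite big1 in row1 => [|w _]; last by rewrite subrr.
rewrite -[RHS]row1 mxE; apply: eq_bigr => j _.
by rewrite -[in LHS]laplacian_sym !mxE mul1r.
Qed.
End LaplacianAction.

Section Centralizers.
Variables (gT : finGroupType) (G : {group gT}).

Lemma center_sub_cent1 u : u \in G -> ('Z(G) \subset 'C_G[u])%g.
Proof.
move=> uG; apply/subsetP => w /centerP [wG cw].
by rewrite mem_cent1 wG; apply/eqP; apply: cw.
Qed.

Lemma cent1_center u : u \in 'Z(G)%g -> 'C_G[u]%g = G.
Proof.
move=> /centerP [_ cu]; apply/setIidPl/subsetP => w wG.
by rewrite cent1E (cu w wG).
Qed.

Lemma cent1_sym x y : x \in G -> y \in G -> (x \in 'C_G[y]%g) = (y \in 'C_G[x]%g).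
Proof. by move=> xG yG; rewrite !mem_cent1 xG yG eq_sym. Qed.

Lemma Con_cent1_eq u w : Con G -> u \in (G :\: 'Z(G))%g ->
  w \in ('C_G[u] :\: 'Z(G))%g -> 'C_G[w]%g = 'C_G[u]%g.
Proof.
move=> HCon uD /setDP [wC wZ].
have wD : w \in (G :\: 'Z(G))%g by rewrite inE wZ (subsetP (subsetIl _ _) _ wC).
have [//|CuCw] := HCon w u wD uD.
by case/negP: wZ; rewrite -CuCw inE wC inE cent1id (subsetP (subsetIl _ _) _ wC).
Qed.
End Centralizers.

Section LaplacianEigenfunctions.
Variables (gT : finGroupType) (G : {group gT}).
Hypothesis HCon : Con G.
Local Notation z := (#|'Z(G)%g|%:R : algC).

Variables (f : gT -> algC) (lam : algC).
Hypothesis eigen_f :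
  {in G, forall u, \sum_(w in 'C_G[u]%g) (f u - f w) = lam * f u}.

Lemma eigen_cent1 u : u \in G ->
  (#|'C_G[u]%g|%:R - lam) * f u = \sum_(w in 'C_G[u]%g) f w.
Proof.
move=> uG; have := eigen_f uG; rewrite sumrB sumr_const => eq_u.
by rewrite mulrBl -eq_u mulr_natl opprB addrC subrK.
Qed.

Hypothesis lam_not_cent1 : {in G, forall u, lam != #|'C_G[u]%g|%:R}.

Lemma eigen_fun_cent1 u w : u \in G -> w \in G ->
  'C_G[u]%g = 'C_G[w]%g -> f u = f w.
Proof.
move=> uG wG Cuw; have nz : #|'C_G[u]%g|%:R - lam != 0.
  by rewrite subr_eq0 eq_sym lam_not_cent1.
by apply: (mulfI nz); rewrite eigen_cent1 // Cuw -eigen_cent1.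
Qed.

Lemma eigen_fun_center u : u \in 'Z(G)%g -> f u = f 1%g.
Proof.
move=> uZ; apply: eigen_fun_cent1; rewrite ?group1 ?(subsetP (center_sub G)) //.
by rewrite !cent1_center ?group1.
Qed.

(* Splitting 'C_G[u] into Z(G), where f = f 1, and 'C_G[u] :\: Z(G), where
   f = f u by (Con), relates f u to f 1 at every non-central u. *)
Lemma eigen_noncentral u : u \in (G :\: 'Z(G))%g -> (z - lam) * f u = z * f 1%g.
Proof.
move=> uD; have /setDP [uG uZ] := uD.
have := eigen_f uG; rewrite (big_setID 'Z(G)%g) /= (setIidPr (center_sub_cent1 uG)).
rewrite [X in _ + X]big1 => [|w wD]; last first.
  by rewrite (@eigen_fun_cent1 w u) ?subrr ?(Con_cent1_eq HCon uD wD) //;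
    case/setDP: wD => /setIP [].
under eq_bigr => w wZ do rewrite (eigen_fun_center wZ).
rewrite sumr_const addr0 => eq_u.
by rewrite mulrBl -eq_u -mulr_natr; ring.
Qed.

Lemma center_card_neq0 : z != 0.
Proof. by rewrite pnatr_eq0 -lt0n cardG_gt0. Qed.

(* For lam = 0, f is constant on G: the commuting graph is connected. *)
Lemma eigen_const : lam = 0 -> {in G, forall u, f u = f 1%g}.
Proof.
move=> lam0 u uG; have [uZ|uZ] := boolP (u \in 'Z(G)%g); first exact: eigen_fun_center.
have uD : u \in (G :\: 'Z(G))%g by rewrite inE uZ uG.
by apply: (mulfI center_card_neq0); rewrite -(eigen_noncentral uD) lam0 subr0.
Qed.

(* For lam outside {0, |Z(G)|}, f vanishes on G: the equation at the identity
   forces f 1 = 0, and f is proportional to f 1 everywhere. *)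
Lemma eigen_zero : lam != 0 -> lam != z -> {in G, forall u, f u = 0}.
Proof.
move=> lam_neq0 lam_neq_z.
have z_lam : z - lam != 0 by rewrite subr_eq0 eq_sym.
set m : algC := #|(G :\: 'Z(G))%g|%:R.
have eq1 := eigen_f (group1 G).
rewrite cent1_center ?group1 // (big_setID 'Z(G)%g) /= (setIidPr (center_sub G)) in eq1.
rewrite big1 ?add0r in eq1 => [|w wZ]; last by rewrite (eigen_fun_center wZ) subrr.
have eqS : (z - lam) * \sum_(w in (G :\: 'Z(G))%g) (f 1%g - f w) = - (lam * f 1%g * m).
  rewrite mulr_sumr (eq_bigr (fun=> - (lam * f 1%g))) ?sumr_const ?mulr_natr ?mulNrn //.
  by move=> w wD; rewrite mulrBr (eigen_noncentral wD); ring.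
have f1_0 : f 1%g = 0.
  have lam_card : z + m - lam != 0.
    have := lam_not_cent1 (group1 G); rewrite cent1_center ?group1 //.
    by rewrite -(cardsID 'Z(G)%g G) (setIidPr (center_sub G)) natrD subr_eq0 eq_sym.
  have : lam * f 1%g * (z + m - lam) = 0.
    have -> : lam * f 1%g * (z + m - lam) = (z - lam) * (lam * f 1%g) + lam * f 1%g * m.
      by ring.
    by rewrite -{1}eq1 eqS addNr.
  by move/eqP; rewrite !mulf_eq0 (negbTE lam_neq0) (negbTE lam_card) orbF => /eqP.
move=> u uG; have [uZ|uZ] := boolP (u \in 'Z(G)%g); first by rewrite eigen_fun_center.
have uD : u \in (G :\: 'Z(G))%g by rewrite inE uZ uG.
by apply: (mulfI z_lam); rewrite eigen_noncentral // f1_0 !mulr0.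
Qed.
End LaplacianEigenfunctions.

Section LaplacianSpectrum.
Variables (gT : finGroupType) (G : {group gT}).
Local Notation L := (cg_laplacian G).
Local Notation z := #|'Z(G)%g|.

Lemma eigenvalue_laplacian0 : eigenvalue L 0.
Proof.
apply/eigenvalueP; exists (vecG G (fun=> 1)).
  by apply/laplacian_eigenP => u _; rewrite mul0r big1 // => w _; rewrite subrr.
by apply/eqP => /vecG_eq0 /(_ 1%g (group1 G)) /eqP; rewrite oner_eq0.
Qed.

Lemma center_eigenfunction (f : gT -> algC) :
  {in 'Z(G)%g, forall w, f w = 0} ->
  (forall u w, u \in (G :\: 'Z(G))%g -> w \in ('C_G[u] :\: 'Z(G))%g -> f w = f u) ->
  \sum_(w in G) f w = 0 ->
  {in G, forall u, \sum_(w in 'C_G[u]%g) (f u - f w) = z%:R * f u}.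
Proof.
move=> fZ fC sum_f u uG; have [uZ|uZ] := boolP (u \in 'Z(G)%g).
  by rewrite cent1_center // fZ // mulr0 sumrB sumr_const mul0rn sum_f subrr.
have uD : u \in (G :\: 'Z(G))%g by rewrite inE uZ uG.
rewrite (big_setID 'Z(G)%g) /= (setIidPr (center_sub_cent1 uG)).
rewrite [X in _ + X]big1 ?addr0 => [|w wD]; last by rewrite (fC u w) ?subrr.
by under eq_bigr => w wZ do rewrite (fZ w wZ) subr0; rewrite sumr_const mulr_natl.
Qed.

(* Under (Con) every eigenvalue of L is 0 or at least |Z(G)|: otherwise it is
   not a centralizer order, and its eigenvector would vanish. *)
Lemma eigenvalue_laplacian_cases r : Con G -> eigenvalue L r ->
  r = 0 \/ z%:R <= r.
Proof.
move=> HCon /eigenvalueP [v]; rewrite -(funGK v) => /laplacian_eigenP eigen_v v_neq0.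
have [->|r_neq0] := eqVneq r 0; [by left | right].
have [->//|r_neq_z] := eqVneq r z%:R.
have [/exists_inP [u uG /eqP ->]|/exists_inPn r_not_cent1] :=
  boolP [exists u in G, r == #|'C_G[u]%g|%:R].
  by rewrite ler_nat subset_leq_card ?center_sub_cent1.
by case/eqP: v_neq0; apply/vecG_eq0/(eigen_zero HCon eigen_v).
Qed.
End LaplacianSpectrum.

Section CenterEigenvalue.
Variables (gT : finGroupType) (G : {group gT}).
Hypothesis HCon : Con G.
Local Notation z := #|'Z(G)%g|.

Lemma mem_cent1D_eq u w c : u \in (G :\: 'Z(G))%g -> w \in ('C_G[u] :\: 'Z(G))%g ->
  c \in G -> (w \in ('C_G[c] :\: 'Z(G))%g) = (u \in ('C_G[c] :\: 'Z(G))%g).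
Proof.
move=> uD wD cG; have /setDP [uG uZ] := uD; have /setDP [/setIP [wG _] wZ] := wD.
by rewrite !in_setD uZ wZ cent1_sym // (Con_cent1_eq HCon uD wD) cent1_sym.
Qed.

Lemma sum_indicator (A : {set gT}) : A \subset G ->
  \sum_(w in G) ((w \in A)%:R : algC) = #|A|%:R.
Proof.
move=> AG; rewrite (eq_bigr (fun w => if w \in A then 1 else 0)) => [|w _]; last first.
  by case: (w \in A).
rewrite -big_mkcondr (eq_bigl (mem A)) ?sumr_const // => w /=.
by rewrite andb_idl // => /(subsetP AG).
Qed.

(* Two non-commuting elements a, b give the eigenvector
   |B| 1_A - |A| 1_B with A = 'C_G[a] :\: 'Z(G), B = 'C_G[b] :\: 'Z(G). *)
Lemma eigenvalue_laplacian_center : ~~ abelian G -> eigenvalue (cg_laplacian G) z%:R.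
Proof.
case/subsetPn => a aG; rewrite -sub_cent1 => /subsetPn [b bG]; rewrite cent1E => nab.
have aZ : a \notin 'Z(G)%g.
  by apply: contra nab => /centerP [_ /(_ b bG) ->].
have bZ : b \notin 'Z(G)%g.
  by apply: contra nab => /centerP [_ /(_ a aG) ->].
set A := ('C_G[a] :\: 'Z(G))%g; set B := ('C_G[b] :\: 'Z(G))%g.
pose f w : algC := #|B|%:R * (w \in A)%:R - #|A|%:R * (w \in B)%:R.
have AG : A \subset G by rewrite subDset subsetU ?subsetIl ?orbT.
have BG : B \subset G by rewrite subDset subsetU ?subsetIl ?orbT.
have fZ : {in 'Z(G)%g, forall w, f w = 0}.
  by move=> w wZ; rewrite /f /A /B !in_setD wZ !mulr0 subrr.
have fC u w : u \in (G :\: 'Z(G))%g -> w \in ('C_G[u] :\: 'Z(G))%g -> f w = f u.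
  by move=> uD wD; rewrite /f !(mem_cent1D_eq uD wD).
have sum_f : \sum_(w in G) f w = 0.
  by rewrite sumrB -!mulr_sumr !sum_indicator // mulrC subrr.
apply/eigenvalueP; exists (vecG G f).
  exact/laplacian_eigenP/center_eigenfunction.
apply/eqP => /vecG_eq0 /(_ a aG) /eqP.
have aA : a \in A by rewrite /A in_setD aZ inE aG cent1id.
have aB : a \notin B by rewrite /B in_setD mem_cent1 aG eq_sym (negbTE nab) !andbF.
have bB : b \in B by rewrite /B in_setD bZ inE bG cent1id.
by rewrite /f aA (negbTE aB) mulr1 mulr0 subr0 pnatr_eq0 cards_eq0 => /eqP B0;
  rewrite B0 inE in bB.
Qed.
End CenterEigenvalue.

Section SimpleZeroEigenvalue.
Variables (gT : finGroupType) (G : {group gT}).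
Local Notation L := (cg_laplacian G).
Local Notation n := #|G|.
Local Notation ones := (\col_(i < n) (1 : algC)).

Lemma laplacian_mul_ones : L *m ones = 0.
Proof.
apply/colP => i; rewrite !mxE -[RHS](laplacian_rowsum i).
by apply: eq_bigr => j _; rewrite [_ j 0]mxE mulr1.
Qed.

(* The first unit row vector e0, and the rank-one matrix E = ones *m e0 whose
   first column is all ones: L + E has the spectrum of L with one eigenvalue
   0 replaced by 1. *)
Definition first_unit_row : 'rV[algC]_n := \row_j ((val j == 0)%N)%:R.
Local Notation e0 := first_unit_row.
Local Notation E := (ones *m e0).

Lemma first_unit_row_mul_ones : e0 *m ones = 1.
Proof.
apply/rowP => i; rewrite ord1 !mxE (bigD1 (Ordinal (cardG_gt0 G))) //= big1 => [|j].
  by rewrite !mxE mulr1 addr0.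
by rewrite -val_eqE /= !mxE => /negbTE ->; rewrite mul0r.
Qed.

(* E is lower triangular, with diagonal 1, 0, ..., 0. *)
Lemma first_col_onesE i j : E i j = ((val j == 0)%N)%:R.
Proof. by rewrite !mxE big_ord1 !mxE mul1r. Qed.

Lemma char_poly_first_col : char_poly E = ('X - 1) * 'X ^+ n.-1.
Proof.
rewrite char_poly_trig; last first.
  by apply/is_trig_mxP => i [[|j] ?] //= _; rewrite first_col_onesE.
rewrite (bigD1 (Ordinal (cardG_gt0 G))) //= first_col_onesE eqxx; congr (_ * _).
rewrite (eq_bigr (fun=> 'X)) ?prodr_const ?cardC1 ?card_ord // => i.
by rewrite -val_eqE /= first_col_onesE => /negbTE ->; rewrite subr0.
Qed.

(* Since L E = 0, (X - L)(X - E) = X (X - (L + E)). *)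
Lemma char_poly_laplacian_first_col :
  char_poly L * char_poly E = 'X ^+ n * char_poly (L + E).
Proof.
rewrite /char_poly -det_mulmx -detZ; congr (\det _).
rewrite /char_poly_mx mulmxBl !mulmxBr mul_scalar_mx mul_mx_scalar.
rewrite -map_mxM mulmxA laplacian_mul_ones mul0mx map_mx0 subr0 map_mxD.
by rewrite scalerBr scalerDr mul_scalar_mx opprD addrA addrAC.
Qed.

(* A kernel vector v of L + E has zero coordinate sum (apply both sides to
   the all-ones vector), hence v E = 0 and v L = 0; under (Con) v is then
   constant on G with zero sum, i.e. v = 0. *)
Lemma det_laplacian_first_col : Con G -> \det (L + E) != 0.
Proof.
move=> HCon; apply/negP => /det0P [v v_neq0 vLE].
have v_ones : v *m ones = 0.
  have : v *m (L + E) *m ones = 0 by rewrite vLE mul0mx.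
  by rewrite mulmxDr mulmxDl -!mulmxA laplacian_mul_ones first_unit_row_mul_ones
    mulmx0 add0r mulmx1.
have vL : vecG G (funG v) *m L = 0 *: vecG G (funG v).
  by rewrite funGK scale0r -[v *m L]addr0 -{1}(mul0mx _ e0) -v_ones -mulmxA -mulmxDr vLE.
have cent1_neq0 : {in G, forall u, 0 != #|'C_G[u]%g|%:R :> algC}.
  by move=> u _; rewrite eq_sym pnatr_eq0 -lt0n cardG_gt0.
have /laplacian_eigenP eigen_v := vL.
have const_v := eigen_const HCon eigen_v cent1_neq0 erefl.
have /matrixP/(_ 0 0) := v_ones; rewrite -[v]funGK /vecG mxE.
under eq_bigr => i _ do rewrite !mxE const_v ?enum_valP // mulr1.
rewrite sumr_const card_ord mxE => /eqP; rewrite mulrn_eq0 eqn0Ngt cardG_gt0 /= => /eqP v1.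
by case/eqP: v_neq0; rewrite -[v]funGK; apply/vecG_eq0 => u uG; rewrite const_v // v1.
Qed.

(* Hence 0 is a simple root of the characteristic polynomial of L:
   if X^2 divided char_poly L, then X would divide char_poly (L + E). *)
Lemma mup0_laplacian : Con G -> (mup 0 (char_poly L) <= 1)%N.
Proof.
move=> HCon; rewrite -ltnS (mup_ltn _ _ (monic_neq0 (char_poly_monic L))) polyC0 subr0.
apply: contra (det_laplacian_first_col HCon) => X2_cpL.
have : 'X ^+ 2 * 'X ^+ n.-1 %| char_poly L * char_poly E.
  by rewrite char_poly_first_col mulrA dvdp_mul ?dvdp_mulr.
rewrite char_poly_laplacian_first_col -exprD addnC addn2 prednK ?cardG_gt0 // exprSr.
rewrite dvdp_mul2l ?expf_neq0 ?polyX_eq0 // -['X]subr0 dvdp_XsubCl rootE horner_coef0.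
by rewrite char_poly_det mulf_eq0 signr_eq0.
Qed.
End SimpleZeroEigenvalue.

Lemma second_smallest (R : numDomainType) (s : seq R) (c : R) : 0 < c ->
  {in s, forall r, r = 0 \/ c <= r} -> 0 \in s -> c \in s ->
  (count_mem 0%R s <= 1)%N -> nth 0 (sort <=%R s) 1 = c.
Proof.
move=> c_gt0 s_cases s0 sc count0.
have ge0_s r : r \in s -> 0 <= r.
  by case/s_cases => [->|/(le_trans (ltW c_gt0))].
have real_s : all (fun r => r \is Num.real) s.
  by apply/allP => r /ge0_s /ger0_real.
have sorted_s := sort_sorted_in (fun x y (xR : x \is Num.real) yR => real_leVge xR yR) real_s.
have perm_s : perm_eq (sort <=%R s) s by rewrite perm_sort.
have mem_s r : (r \in sort <=%R s) = (r \in s) by apply: perm_mem.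
move: sorted_s mem_s (seq.permP perm_s (pred1 0)); case: (sort <=%R s) => [|x [|y t]] /=.
- by move=> _ /(_ 0); rewrite s0.
- move=> _ mem_s _; have := mem_s 0; have := mem_s c; rewrite s0 sc !inE => /eqP<- /eqP c0.
  by rewrite -c0 ltxx in c_gt0.
move=> sorted_s mem_s count_s.
have /andP [_ sorted_yt] := sorted_s.
have x_min : all (>= x) (y :: t) :=
  order_path_min (@le_trans _ R) (sorted_s : path _ x (y :: t)).
have y_min : all (>= y) t := order_path_min (@le_trans _ R) sorted_yt.
have x0 : x = 0.
  apply/le_anti; rewrite ge0_s -?mem_s ?mem_head // andbT.
  have := mem_s 0; rewrite s0 inE => /predU1P [<-|/(allP x_min)//].
  exact: lexx.
have /s_cases [y0|le_cy] : y \in s by rewrite -mem_s !inE eqxx orbT.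
  by move: count0; rewrite -count_s /= x0 y0 eqxx.
apply/le_anti; rewrite le_cy andbT.
have := mem_s c; rewrite sc inE x0 => /predU1P [c0|].
  by rewrite -c0 ltxx in c_gt0.
by rewrite inE => /predU1P [->|/(allP y_min)].
Qed.

Unset Implicit Arguments.
Set Strict Implicit.

Theorem corollary2p11 (gT : finGroupType) (G : {group gT}) :
  ~~ abelian G -> Con G ->
  algebraic_connectivity (cg_laplacian G) = (#|'Z(G)%g|)%:R.
Proof.
move=> nonabelian HCon; rewrite /algebraic_connectivity /eigenvalues_mult.
case: (closed_field_poly_normal _) => s /= cpL.
rewrite (monicP (char_poly_monic _)) scale1r in cpL.
have mem_s r : (r \in s) = eigenvalue (cg_laplacian G) r.
  by rewrite eigenvalue_root_char cpL root_prod_XsubC.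
apply: second_smallest.
- by rewrite ltr0n cardG_gt0.
- by move=> r; rewrite mem_s => /(eigenvalue_laplacian_cases HCon).
- by rewrite mem_s eigenvalue_laplacian0.
- by rewrite mem_s eigenvalue_laplacian_center.
- by rewrite -mu_prod_XsubC -cpL mup0_laplacian.
Qed.
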